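(* Let $m,n$ be natural numbers with $m>2$, $n>1$ and $n\ge m-1$, and let $\mathcal X$ be a semigroup variety with $\mathcal X\subseteq\mathcal D_m$. Then $\mathcal A_n\vee\mathcal X=\mathcal A_n\vee\operatorname{ZR}(\mathcal X)$.
   Context: $\operatorname{var}\Sigma$ denotes the semigroup variety defined by identities $\Sigma$. For a word $w$ and a letter $x$ not occurring in $w$, the symbolic identity $w=0$ stands for the pair $wx=xw=w$. $\mathcal A_n=\operatorname{var}\{x^ny=y,\ xy=yx\}$, $\mathcal D_m=\operatorname{var}\{x^m=0,\ xy=yx\}$. $\mathcal{COM}$ is the variety of all commutative semigroups. Identities of the form $w=0$ are called 0-reduced; a commutative variety is 0-reduced in $\mathbf{Com}$ if it is defined within $\mathcal{COM}$ by 0-reduced identities only. For a commutative nil-variety $\mathcal X$, $\operatorname{ZR}(\mathcal X)$ is the least variety 0-reduced in $\mathbf{Com}$ containing $\mathcal X$, i.e. the variety defined within $\mathcal{COM}$ by all 0-reduced identities holding in $\mathcal X$. *)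

From mathcomp Require Import all_boot.
Set Implicit Arguments. Unset Strict Implicit. Unset Printing Implicit Defensive.

Record semigroup := Semigroup {
  carrier :> Type;
  sop : carrier -> carrier -> carrier;
  sopA : forall x y z, sop x (sop y z) = sop (sop x y) z }.

(* Semigroup words over the countable alphabet nat: a nonempty word
   a :: s is represented as the pair (a, s). *)
Definition word := (nat * seq nat)%type.
Definition letters (w : word) : seq nat := w.1 :: w.2.
Definition wcat (u v : word) : word := (u.1, u.2 ++ letters v).
Definition wlet (x : nat) : word := (x, [::]).
Definition wpow (x k : nat) : word := (x, nseq k.-1 x).

Definition eval (S : semigroup) (f : nat -> S) (w : word) : S :=
  foldl (fun acc x => sop acc (f x)) (f w.1) w.2.

Definition identity := (word * word)%type.

Definition sat (S : semigroup) (e : identity) : Prop :=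
  forall f : nat -> S, eval f e.1 = eval f e.2.

Definition sclass := semigroup -> Prop.

Definition Mod (Sigma : identity -> Prop) : sclass :=
  fun S => forall e, Sigma e -> sat S e.
Definition Id (K : sclass) : identity -> Prop :=
  fun e => forall S, K S -> sat S e.

Definition is_variety (K : sclass) : Prop :=
  exists Sigma : identity -> Prop, forall S, K S <-> Mod Sigma S.

Definition subvar (K L : sclass) : Prop := forall S, K S -> L S.
Definition veq (K L : sclass) : Prop := forall S, K S <-> L S.

(* Join: the variety generated by K u L, i.e. var of all identities holding
   in both (Birkhoff). *)
Definition vjoin (K L : sclass) : sclass := Mod (Id (fun S => K S \/ L S)).

(* The symbolic identity w = 0 : the identities wx = w, xw = w, x not in w. *)
Definition zero_ids (w : word) : identity -> Prop :=
  fun e => exists x : nat, x \notin letters w /\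
     (e = (wcat w (wlet x), w) \/ e = (wcat (wlet x) w, w)).

Definition comm_id : identity := (wcat (wlet 0) (wlet 1), wcat (wlet 1) (wlet 0)).

Definition A_var (n : nat) : sclass :=
  Mod (fun e => e = (wcat (wpow 0 n) (wlet 1), wlet 1) \/ e = comm_id).

Definition D_var (m : nat) : sclass :=
  Mod (fun e => zero_ids (wpow 0 m) e \/ e = comm_id).

(* ZR(X): defined within COM by all 0-reduced identities w = 0 holding in X. *)
Definition ZR (X : sclass) : sclass :=
  Mod (fun e => e = comm_id \/
         exists w : word, (forall e', zero_ids w e' -> Id X e') /\ zero_ids w e).

From Pilot Require Import Defs.
From mathcomp Require Import all_boot all_order all_algebra.
Import GRing.Theory.
Set Implicit Arguments. Unset Strict Implicit. Unset Printing Implicit Defensive.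

(* Since X is contained in ZR(X), it suffices to check that every identity
   u = v of A_n v X holds in ZR(X). If u and v have the same content this is
   commutativity. Otherwise, evaluating in Z_n shows that some letter z occurs
   in u and v with multiplicities that are congruent mod n but different, so
   they differ by at least n >= m - 1. In a member of D_m this makes both sides
   zero: either z does not occur in u, and substituting z^m for z turns v, hence
   u, into zero; or z occurs at least m times in v. Thus u = 0 and v = 0 hold in
   X, hence in ZR(X), where then u = uv = vu = v. *)

Lemma filter_pred1_nseq (T : eqType) (z : T) s :
  filter (pred1 z) s = nseq (count_mem z s) z.
Proof.
by rewrite -size_filter; apply/all_pred1P; rewrite all_filter; apply/allP => x _; apply/implyP.
Qed.

Lemma exists_fresh (s : seq nat) : exists x, x \notin s.
Proof.
exists (\max_(i <- s) i).+1; apply/negP => /(leq_bigmax_seq (P := xpredT) (F := id))/(_ isT).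
by rewrite ltnn.
Qed.

Lemma letters_wcat u v : letters (wcat u v) = letters u ++ letters v.
Proof. by []. Qed.

Lemma letters_wpow x k : 0 < k -> letters (wpow x k) = nseq k x.
Proof. by case: k. Qed.

Lemma sat_comm_id_comm (S : semigroup) : sat S comm_id -> commutative (@sop S).
Proof. by move=> Scomm a b; apply: (Scomm (fun k => if k == 0 then a else b)). Qed.

Section Eval.
Variable S : semigroup.
Implicit Types (f : nat -> S) (u v w : word).

Lemma foldl_sopA (a b : S) s :
  foldl (@sop S) (sop a b) s = sop a (foldl (@sop S) b s).
Proof. by elim: s a b => //= x s IHs a b; rewrite -sopA IHs. Qed.

Lemma evalE f w : eval f w = foldl (@sop S) (f w.1) (map f w.2).
Proof. by rewrite /eval; elim: w.2 (f w.1) => //= x s IHs c; apply: IHs. Qed.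

Lemma eval_wcat f u v : eval f (wcat u v) = sop (eval f u) (eval f v).
Proof. by rewrite !evalE /= map_cat foldl_cat /= foldl_sopA. Qed.

Lemma eq_in_eval f g w : {in letters w, f =1 g} -> eval f w = eval g w.
Proof.
move=> fg; rewrite !evalE fg ?mem_head //; congr foldl.
by apply/eq_in_map => x xw; apply: fg; rewrite inE xw orbT.
Qed.

Lemma foldl_left_zero (c : S) s : left_zero c (@sop S) -> foldl (@sop S) c s = c.
Proof. by move=> c0; elim: s => //= x s; rewrite c0. Qed.

Lemma sat_sym u v : sat S (u, v) -> sat S (v, u).
Proof. by move=> uv f; rewrite /= uv. Qed.

Section Commutative.
Hypothesis sopC : commutative (@sop S).

(* oAC adjoins an identity to S, so that the bigop permutation lemmas apply. *)
Local Notation oop := (oAC (@sopA S) sopC).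

Lemma some_eval f w : Some (eval f w) = \big[oop/None]_(x <- letters w) Some (f x).
Proof.
rewrite evalE big_cons; elim: w.2 (f w.1) => [|x s IHs] c; first by rewrite big_nil.
by rewrite /= IHs big_cons Monoid.mulmA.
Qed.

Lemma eval_perm f u v : perm_eq (letters u) (letters v) -> eval f u = eval f v.
Proof. by move=> uv; apply: Some_inj; rewrite !some_eval (perm_big _ uv). Qed.

Lemma eval_left_zero_mem f w z :
  left_zero (f z) (@sop S) -> z \in letters w -> left_zero (eval f w) (@sop S).
Proof.
move=> fz0 zw; rewrite (@eval_perm f w (z, rem z (letters w))) ?perm_to_rem //.
by rewrite evalE foldl_left_zero.
Qed.

Lemma eval_left_zero_count m f w z : 0 < m ->
  (forall t : S, left_zero (eval (fun=> t) (wpow 0 m)) (@sop S)) ->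
  m <= count_mem z (letters w) -> left_zero (eval f w) (@sop S).
Proof.
move=> m_gt0 pow0 zm; set s := letters w.
set r := nseq (count_mem z s - m) z ++ filter (predC1 z) s.
have /eval_perm -> : perm_eq s (letters (z, nseq m.-1 z ++ r)).
  rewrite /letters -cat_cons -[z :: _]/(nseq m.-1.+1 z) prednK // catA -nseqD.
  by rewrite subnKC // -filter_pred1_nseq perm_sym perm_filterC.
have -> : eval f (z, nseq m.-1 z ++ r) = foldl (@sop S) (eval f (wpow z m)) (map f r).
  by rewrite !evalE map_cat foldl_cat.
have -> : eval f (wpow z m) = eval (fun=> f z) (wpow 0 m) by rewrite !evalE /= !map_nseq.
by rewrite foldl_left_zero.
Qed.
End Commutative.
End Eval.

Section ZeroIdentities.
Variables (T : semigroup) (w : word).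

Lemma sat_zero_ids_left_zero :
  (forall e, zero_ids w e -> sat T e) -> forall f, left_zero (eval f w) (@sop T).
Proof.
move=> Tw f t; have [x xw] := exists_fresh (letters w).
pose g y := if y == x then t else f y.
have gw : eval g w = eval f w.
  by apply: eq_in_eval => y yw; rewrite /g; case: eqP => // yx; rewrite -yx yw in xw.
have := Tw (wcat w (wlet x), w) _ g; rewrite /= eval_wcat gw /g /eval /= eqxx.
by apply; exists x; split => //; left.
Qed.

Lemma left_zero_sat_zero_ids : commutative (@sop T) ->
  (forall f, left_zero (eval f w) (@sop T)) -> forall e, zero_ids w e -> sat T e.
Proof.
by move=> sopC w0 e [x [_ [->|->]]] f; rewrite /= eval_wcat ?w0 // sopC w0.
Qed.
End ZeroIdentities.

Lemma D_var_sat_comm_id m (S : semigroup) : D_var m S -> sat S comm_id.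
Proof. by move=> SD; apply: SD; right. Qed.

Lemma D_var_comm m (S : semigroup) : D_var m S -> commutative (@sop S).
Proof. by move/D_var_sat_comm_id/sat_comm_id_comm. Qed.

Lemma D_var_pow_left_zero m (S : semigroup) : D_var m S ->
  forall t : S, left_zero (eval (fun=> t) (wpow 0 m)) (@sop S).
Proof. by move=> SD t; apply: sat_zero_ids_left_zero => e e0; apply: SD; left. Qed.

Definition additive_semigroup (V : nmodType) : semigroup :=
  @Defs.Semigroup V +%R (@addrA V).

Lemma eval_additive (V : nmodType) (f : nat -> V) w :
  eval (S := additive_semigroup V) f w = (\sum_(x <- letters w) f x)%R.
Proof.
rewrite evalE big_cons; elim: w.2 (f w.1) => [|x s IHs] c /=.
  by rewrite big_nil addr0.
by rewrite IHs big_cons addrA.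
Qed.

Lemma Zp_A_var n : 1 < n -> A_var n (additive_semigroup 'Z_n).
Proof.
move=> n_gt1 e [->|->] f; rewrite !eval_additive !letters_wcat.
  have xn0 (x : 'Z_n) : (x *+ n = 0)%R by rewrite -mulr_natr pchar_Zp // mulr0.
  by rewrite letters_wpow ?(ltnW n_gt1) // big_cat big_nseq iter_addr_0 xn0 /= add0r.
by rewrite !big_cat /= !big_cons !big_nil addrC.
Qed.

Lemma Zp_sum_indicator n (s : seq nat) z :
  (\sum_(x <- s) (x == z)%:R = (count_mem z s)%:R :> 'Z_n)%R.
Proof.
rewrite -[RHS]iter_addr_0 -big_const_seq [RHS]big_mkcond.
by apply: eq_bigr => x _; rewrite /= -mulrb.
Qed.

Lemma A_var_count_eqmod n u v : 1 < n ->
  (forall S, A_var n S -> sat S (u, v)) ->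
  forall z, count_mem z (letters u) = count_mem z (letters v) %[mod n].
Proof.
move=> n_gt1 Auv z; have := Auv _ (Zp_A_var n_gt1) (fun x => (x == z)%:R%R).
by rewrite !eval_additive !Zp_sum_indicator => /(congr1 val); rewrite /= !(val_Zp_nat n_gt1).
Qed.

Section NilpotentCommutative.
Variables (m : nat) (S : semigroup).
Hypotheses (m_gt0 : 0 < m) (SD : D_var m S).

Lemma D_var_sat_left_zero u v z : sat S (u, v) ->
  count_mem z (letters u) < count_mem z (letters v) ->
  m.-1 <= count_mem z (letters v) - count_mem z (letters u) ->
  forall f, left_zero (eval f u) (@sop S).
Proof.
move=> uv lt_uv gap f; have sopC := D_var_comm SD; have pow0 := D_var_pow_left_zero SD.
have [zu0|zu_gt0] := posnP (count_mem z (letters u)).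
  (* Substituting z^m for z leaves u unchanged but makes v zero. *)
  pose g y := if y == z then eval (fun=> f z) (wpow 0 m) else f y.
  have -> : eval f u = eval g u.
    apply: eq_in_eval => y yu; rewrite /g; case: eqP => // yz.
    by move/count_memPn: zu0; rewrite -yz yu.
  rewrite (uv g); apply: (eval_left_zero_mem sopC (z := z)); first by rewrite /g eqxx.
  by rewrite -has_pred1 has_count -zu0.
have zv : m <= count_mem z (letters v).
  by rewrite -(subnK (ltnW lt_uv)) -(prednK m_gt0) -addn1 leq_add.
by rewrite (uv f); apply: (eval_left_zero_count sopC f m_gt0 pow0 zv).
Qed.

Lemma D_var_sat_left_zero_eqmod n u v z : sat S (u, v) -> m.-1 <= n ->
  count_mem z (letters u) != count_mem z (letters v) ->
  count_mem z (letters u) = count_mem z (letters v) %[mod n] ->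
  forall f, left_zero (eval f u) (@sop S) /\ left_zero (eval f v) (@sop S).
Proof.
move=> uv mn neq_uv eqmod_uv f.
have gap a b : a < b -> a = b %[mod n] -> m.-1 <= b - a.
  move=> lt_ab eq_ab; apply: leq_trans mn (dvdn_leq _ _); first by rewrite subn_gt0.
  by rewrite -eqn_mod_dvd ?(ltnW lt_ab) // eq_ab.
case: ltngtP neq_uv => // [lt_uv|lt_vu] _.
  have u0 := D_var_sat_left_zero uv lt_uv (gap _ _ lt_uv eqmod_uv) f.
  by split; rewrite -?(uv f).
have v0 := D_var_sat_left_zero (sat_sym uv) lt_vu (gap _ _ lt_vu (esym eqmod_uv)) f.
by split; rewrite ?(uv f).
Qed.
End NilpotentCommutative.

Lemma ZR_left_zero (X : sclass) (T : semigroup) w :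
  (forall S, X S -> sat S comm_id) -> ZR X T ->
  (forall S, X S -> forall f, left_zero (eval f w) (@sop S)) ->
  forall f, left_zero (eval f w) (@sop T).
Proof.
move=> XC TZ Xw; apply: sat_zero_ids_left_zero => e we; apply: TZ; right.
exists w; split=> // e' we' S XS.
exact: left_zero_sat_zero_ids (sat_comm_id_comm (XC _ XS)) (Xw _ XS) _ we'.
Qed.

Lemma ZR_sat_of_Id m n (X : sclass) u v : 0 < m -> 1 < n -> m.-1 <= n ->
  subvar X (D_var m) -> Id (fun S => A_var n S \/ X S) (u, v) ->
  forall T, ZR X T -> sat T (u, v).
Proof.
move=> m_gt0 n_gt1 mn XD uv T TZ.
have XC S : X S -> sat S comm_id by move/XD/D_var_sat_comm_id.
have sopC := sat_comm_id_comm (TZ _ (or_introl erefl)).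
have [perm_uv|/allPn[z _ neq_uv]] := boolP (perm_eq (letters u) (letters v)).
  by move=> f; apply: eval_perm.
have eqmod_uv := A_var_count_eqmod n_gt1 (fun S AS => uv S (or_introl AS)) z.
have [Xu Xv] : (forall S, X S -> forall f, left_zero (eval f u) (@sop S)) /\
               (forall S, X S -> forall f, left_zero (eval f v) (@sop S)).
  by split=> S XS f; have [] := D_var_sat_left_zero_eqmod m_gt0 (XD _ XS)
    (uv S (or_intror XS)) mn neq_uv eqmod_uv f.
move=> f; have u0 := ZR_left_zero XC TZ Xu f; have v0 := ZR_left_zero XC TZ Xv f.
by rewrite /= -[LHS](u0 (eval f v)) sopC v0.
Qed.

Lemma subvar_ZR (X : sclass) : (forall S, X S -> sat S comm_id) -> subvar X (ZR X).
Proof. by move=> XC S XS e [->|[w [wX we]]]; [apply: XC | apply: wX _ we _ XS]. Qed.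

Lemma vjoin_subvar (K L L' : sclass) :
  (forall e, Id (fun S => K S \/ L' S) e -> Id (fun S => K S \/ L S) e) ->
  subvar (vjoin K L) (vjoin K L').
Proof. by move=> LL' S SKL e /LL'; apply: SKL. Qed.

Theorem mainTheorem4 (m n : nat) (X : sclass) :
  2 < m -> 1 < n -> m - 1 <= n ->
  is_variety X -> subvar X (D_var m) ->
  veq (vjoin (A_var n) X) (vjoin (A_var n) (ZR X)).
Proof.
rewrite subn1 => m_gt2 n_gt1 mn _ XD S; have m_gt0 : 0 < m by apply: ltnW (ltnW m_gt2).
have XC S' : X S' -> sat S' comm_id by move/XD/D_var_sat_comm_id.
split; apply: vjoin_subvar => -[u v] uv T [AT|LT].
- by apply: uv; left.
- by apply: uv; right; apply: subvar_ZR LT.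
- by apply: uv; left.
- exact: ZR_sat_of_Id m_gt0 n_gt1 mn XD uv T LT.
Qed.
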